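(* Let $\mathcal C$ be a $k$-coloured operad (in the sense of the context). Then the enveloping operad $\mathrm{Env}(\mathcal C)$ is isomorphic to the operad $\mathrm{AC}(\mathcal C^+)$ of anticoloured syntax trees on $\mathcal C^+$. (Under the isomorphism, each $\equiv$-class of syntax trees on $\bar{\mathcal C}$ is sent to the unique anticoloured syntax tree it contains.)
   Context: All operads are nonsymmetric operads in the category of sets. Fix $k\ge 1$ and write $[k]=\{1,\dots,k\}$. A $k$-coloured operad $\mathcal C=\biguplus_{n\ge1}\mathcal C(n)$ assigns to each $x\in\mathcal C(n)$ an output colour $\mathrm{Out}(x)\in[k]$ and input colours $\mathrm{In}_1(x),\dots,\mathrm{In}_n(x)\in[k]$. It has partial compositions $x\circ_i y\in\mathcal C(n+m-1)$, for $x\in\mathcal C(n)$, $y\in\mathcal C(m)$ and $i\in[n]$, which are defined exactly when $\mathrm{Out}(y)=\mathrm{In}_i(x)$. The composite has output colour $\mathrm{Out}(x)$ and input colours $\mathrm{In}_1(x),\dots,\mathrm{In}_{i-1}(x),\mathrm{In}_1(y),\dots,\mathrm{In}_m(y),\mathrm{In}_{i+1}(x),\dots,\mathrm{In}_n(x)$. These compositions satisfy the usual associativity and unit axioms of coloured operads. It is assumed that $\mathcal C(1)=\{\mathbf 1_c : c\in[k]\}$, where $\mathbf 1_c$ is a unit with output and input colour $c$, and that each $\mathcal C(n)$ is finite. An (uncoloured) operad is a $1$-coloured operad. Let $\mathcal C^+=\mathcal C\setminus\mathcal C(1)$, and let $\bar{\mathcal C}$ be the same graded set with all colours forgotten, i.e.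 all colours set to $1$. The enveloping operad $\mathrm{Env}(\mathcal C)$ is the quotient of the free uncoloured operad on $\bar{\mathcal C}$ (whose elements are planar rooted syntax trees with nodes of arity $\ell$ labelled by elements of $\mathcal C(\ell)$, composed by grafting) by the smallest operadic congruence $\equiv$ such that $\mathfrak c(x)\circ_i\mathfrak c(y)\equiv\mathfrak c(x\circ_i y)$ for all $x,y\in\mathcal C^+$ with $x\circ_i y$ defined in $\mathcal C$. Here $\mathfrak c(x)$ denotes the corolla, i.e. the tree with a single internal node labelled $x$. An anticoloured syntax tree on $\mathcal C^+$ is a planar rooted tree whose internal nodes of arity $\ell$ are labelled by elements of $\mathcal C(\ell)$, $\ell\ge2$, such that whenever an internal node $s$ labelled $y$ is the $i$th child of an internal node $r$ labelled $x$, one has $\mathrm{In}_i(x)\ne\mathrm{Out}(y)$. The set $\mathrm{AC}(\mathcal C^+)$ of such trees, with the one-leaf tree as unit, is an operad with the following composition. For trees $S,T$ and a leaf index $i$ of $S$, let $r$ be the parent node of the $i$th leaf of $S$, let that leaf be the $j$th child of $r$, and let $s$ be the root of $T$. Then $S\circ_i T$ is obtained by grafting the root of $T$ on the $i$th leaf of $S$. If moreover $\mathrm{Out}(T)=\mathrm{In}_j(r)$, one then replaces the two nodes $r$ (label $x$) and $s$ (label $y$) by a single node labelled $x\circ_j y$. *)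

From mathcomp Require Import all_boot.

Set Implicit Arguments.
Unset Strict Implicit.
Unset Printing Implicit Defensive.

(* Conventions: colours are natural numbers c < k (standing for [k] shifted  *)
(* by one); input positions and partial-composition indices are 0-based      *)
(* (index i here is index i+1 in the paper).  The partial composition        *)
(* ccomp x i y is a total function, but all axioms only constrain it when    *)
(* x o_i y is defined, i.e. i < arity x and cout y = In_i(x).                *)

Record coloured_operad (k : nat) := ColOperad {
  celt : eqType;
  arity : celt -> nat;
  cout : celt -> nat;
  cin : celt -> seq nat;
  ccomp : celt -> nat -> celt -> celt;
  cunit : nat -> celt;
  arity_pos : forall x, 0 < arity x;
  size_cin : forall x, size (cin x) = arity x;
  cout_lt : forall x, cout x < k;
  cin_lt : forall x, all (fun c => c < k) (cin x);
  finite_arity : forall n, exists s : seq celt, forall x, arity x = n -> x \in s;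
  ccomp_arity : forall x i y, i < arity x -> cout y = nth 0 (cin x) i ->
      arity (ccomp x i y) = arity x + arity y - 1;
  ccomp_cout : forall x i y, i < arity x -> cout y = nth 0 (cin x) i ->
      cout (ccomp x i y) = cout x;
  ccomp_cin : forall x i y, i < arity x -> cout y = nth 0 (cin x) i ->
      cin (ccomp x i y) = take i (cin x) ++ cin y ++ drop i.+1 (cin x);
  cunit_arity : forall c, c < k -> arity (cunit c) = 1;
  cunit_cout : forall c, c < k -> cout (cunit c) = c;
  cunit_cin : forall c, c < k -> cin (cunit c) = [:: c];
  arity1_unit : forall x, arity x = 1 -> exists2 c, c < k & x = cunit c;
  ccomp_unitl : forall x, ccomp (cunit (cout x)) 0 x = x;
  ccomp_unitr : forall x i, i < arity x -> ccomp x i (cunit (nth 0 (cin x) i)) = x;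
  ccomp_assoc_seq : forall x y z i j,
      i < arity x -> cout y = nth 0 (cin x) i ->
      j < arity y -> cout z = nth 0 (cin y) j ->
      ccomp (ccomp x i y) (i + j) z = ccomp x i (ccomp y j z);
  ccomp_assoc_par : forall x y z i j,
      i < j -> j < arity x ->
      cout y = nth 0 (cin x) i -> cout z = nth 0 (cin x) j ->
      ccomp (ccomp x i y) (j + arity y - 1) z = ccomp (ccomp x j z) i y
}.

Arguments celt {k}.
Arguments arity {k C} : rename.
Arguments cout {k C} : rename.
Arguments cin {k C} : rename.
Arguments ccomp {k C} : rename.
Arguments cunit {k} C : rename.

Inductive tree (A : Type) : Type :=
| Leaf : tree A
| Node : A -> seq (tree A) -> tree A.

Arguments Leaf {A}.
Arguments Node {A}.

Fixpoint nleaves A (t : tree A) : nat :=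
  match t with
  | Leaf => 1
  | Node _ ts => sumn (map (@nleaves A) ts)
  end.

Definition is_leaf A (t : tree A) : bool := if t is Leaf then true else false.

Fixpoint graft A (S : tree A) (i : nat) (T : tree A) : tree A :=
  match S with
  | Leaf => if i == 0 then T else Leaf
  | Node x ts =>
      Node x ((fix gs (ts : seq (tree A)) (i : nat) : seq (tree A) :=
                 match ts with
                 | [::] => [::]
                 | t :: ts' => if i < nleaves t then graft t i T :: ts'
                               else t :: gs ts' (i - nleaves t)
                 end) ts i)
  end.

Fixpoint locate A (ts : seq (tree A)) (i : nat) : nat * nat :=
  match ts with
  | [::] => (0, i)
  | t :: ts' => if i < nleaves t then (0, i)
                else let: (j, l) := locate ts' (i - nleaves t) in (j.+1, l)
  end.

Section Coloured.
Variables (k : nat) (C : coloured_operad k).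

Definition ctree := tree (celt C).

Definition corolla (x : celt C) : ctree := Node x (nseq (arity x) Leaf).

(* Syntax trees on Cbar^+ : each internal node labelled x of arity >= 2 has
   exactly arity x children. *)
Fixpoint wf_tree (t : ctree) : bool :=
  match t with
  | Leaf => true
  | Node x ts => [&& size ts == arity x, 1 < arity x & all wf_tree ts]
  end.

Fixpoint anticoloured (t : ctree) : bool :=
  match t with
  | Leaf => true
  | Node x ts =>
      [&& size ts == arity x, 1 < arity x,
          all (fun p : nat * ctree =>
                 match p.2 with
                 | Leaf => true
                 | Node y _ => cout y != nth 0 (cin x) p.1
                 end) (zip (iota 0 (size ts)) ts)
        & all anticoloured ts]
  end.

Definition merge_graft (x : celt C) (ts : seq ctree) (j : nat) (T : ctree) : ctree :=
  match T with
  | Leaf => Node x ts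
  | Node y us =>
      if cout y == nth 0 (cin x) j
      then Node (ccomp x j y) (take j ts ++ us ++ drop j.+1 ts)
      else Node x (set_nth Leaf ts j T)
  end.

Fixpoint acgraft (S : ctree) (i : nat) (T : ctree) : ctree :=
  match S with
  | Leaf => if i == 0 then T else Leaf
  | Node x ts =>
      let: (j, l) := locate ts i in
      if (j < size ts) && is_leaf (nth Leaf ts j) then merge_graft x ts j T
      else
      Node x ((fix gs (ts : seq ctree) (i : nat) : seq ctree :=
                 match ts with
                 | [::] => [::]
                 | t :: ts' => if i < nleaves t then acgraft t i T :: ts'
                               else t :: gs ts' (i - nleaves t)
                 end) ts i)
  end.

Inductive env_cong : ctree -> ctree -> Prop :=
| env_gen x i y : 1 < arity x -> 1 < arity y -> i < arity x ->
    cout y = nth 0 (cin x) i ->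
    env_cong (graft (corolla x) i (corolla y)) (corolla (ccomp x i y))
| env_refl t : wf_tree t -> env_cong t t
| env_sym s t : env_cong s t -> env_cong t s
| env_trans s t u : env_cong s t -> env_cong t u -> env_cong s u
| env_comp S S' T T' i : env_cong S S' -> env_cong T T' -> i < nleaves S ->
    env_cong (graft S i T) (graft S' i T').

End Coloured.

Arguments corolla {k C}.
Arguments wf_tree {k C}.
Arguments anticoloured {k C}.
Arguments acgraft {k C}.
Arguments env_cong {k C}.

(* Orient the generating relations c(x) o_i c(y) == c(x o_i y) from left to
   right, as edge contractions.  The normal form [acnorm] is computed bottom-up:
   after normalising the children, the root absorbs every child whose output
   colour matches the corresponding input colour.  It is anticoloured and
   congruent to its argument (each absorption contracts an edge, and an edge can
   be contracted inside any context because the congruence is operadic).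
   The key identity is acnorm (S o_i T) = acnorm S o_i acnorm T, the right-hand
   composition being that of AC(C^+); it follows from associativity of C.
   Applied to two corollas it shows that both sides of a generator have the same
   normal form, so acnorm is constant on congruence classes; since it fixes
   anticoloured trees, each class contains exactly one of them, and composition
   in AC(C^+) is the normal form of grafting. *)

From mathcomp Require Import all_boot.
From mathcomp Require Import zify.
Set Implicit Arguments.
Unset Strict Implicit.
Unset Printing Implicit Defensive.

Section Trees.
Variable A : Type.
Implicit Types (t u : tree A) (ts pre post : seq (tree A)).

Fixpoint every (P : tree A -> Prop) ts : Prop :=
  if ts is t :: ts' then P t /\ every P ts' else True.

Lemma tree_ind_every (P : tree A -> Prop) : P Leaf ->
  (forall x ts, every P ts -> P (Node x ts)) -> forall t, P t.
Proof.
move=> hL hN; refine (fix IH t := match t with Leaf => hL | Node x ts => hN x ts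
  ((fix F ts := match ts return every P ts with [::] => I
      | t :: ts => conj (IH t) (F ts) end) ts) end).
Qed.

Lemma every_mid (P : tree A -> Prop) pre t post : every P (pre ++ t :: post) -> P t.
Proof. by elim: pre => [[]|u pre IH [_]]. Qed.

Lemma every_sub_all (a b : pred (tree A)) ts :
  every (fun t => a t -> b t) ts -> all a ts -> all b ts.
Proof. by elim: ts => //= t ts IH [h1 h2] /andP [a1 a2]; rewrite h1 // IH. Qed.

Definition forest_leaves ts := sumn (map (@nleaves A) ts).

Lemma nleavesE x ts : nleaves (Node x ts) = forest_leaves ts.
Proof. by []. Qed.

Lemma forest_leaves_cons t ts : forest_leaves (t :: ts) = nleaves t + forest_leaves ts.
Proof. by []. Qed.

Lemma forest_leaves_cat ts1 ts2 :
  forest_leaves (ts1 ++ ts2) = forest_leaves ts1 + forest_leaves ts2.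
Proof. by rewrite /forest_leaves map_cat sumn_cat. Qed.

Lemma forest_leaves_nseq n : forest_leaves (nseq n Leaf) = n.
Proof. by elim: n => //= n; rewrite /forest_leaves /= => ->. Qed.

Lemma forest_leaf_split ts i : i < forest_leaves ts ->
  exists pre t post l,
    [/\ ts = pre ++ t :: post, i = forest_leaves pre + l & l < nleaves t].
Proof.
elim: ts i => [|t ts IH] i //; rewrite forest_leaves_cons => hi.
case: (ltnP i (nleaves t)) => h; first by exists [::], t, ts, i.
have [pre [u [post [l [-> E2 E3]]]]] := IH (i - nleaves t) ltac:(lia).
exists (t :: pre), u, post, l; split => //.
by rewrite forest_leaves_cons -addnA -E2; lia.
Qed.

Lemma locate_cat pre t post i : i < nleaves t ->
  locate (pre ++ t :: post) (forest_leaves pre + i) = (size pre, i).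
Proof.
move=> hi; elim: pre => [|u pre IH] /=; first by rewrite hi.
by rewrite forest_leaves_cons -addnA ltnNge leq_addr /= addKn IH.
Qed.

Definition graft_forest (N : tree A) := fix gs ts (i : nat) : seq (tree A) :=
  match ts with
  | [::] => [::]
  | t :: ts' => if i < nleaves t then graft t i N :: ts'
                else t :: gs ts' (i - nleaves t)
  end.

Lemma graft_child x pre t post i N : i < nleaves t ->
  graft (Node x (pre ++ t :: post)) (forest_leaves pre + i) N =
  Node x (pre ++ graft t i N :: post).
Proof.
move=> hi; congr Node; rewrite -/(graft_forest N _ _).
elim: pre => [|u pre IH] /=; first by rewrite hi.
by rewrite forest_leaves_cons -addnA ltnNge leq_addr /= addKn IH.
Qed.

Lemma graft_leaf_child x pre post N :
  graft (Node x (pre ++ Leaf :: post)) (forest_leaves pre) N = Node x (pre ++ N :: post).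
Proof. by rewrite -[forest_leaves pre]addn0 graft_child. Qed.

Lemma forest_fill_ind (w : pred (tree A)) (P : seq (tree A) -> Prop) n :
  P (nseq n Leaf) ->
  (forall pre post t, w t -> P (pre ++ Leaf :: post) -> P (pre ++ t :: post)) ->
  forall ts, size ts = n -> all w ts -> P ts.
Proof.
move=> hb hs.
suff H m ts : m + size ts = n -> all w ts -> P (nseq m Leaf ++ ts).
  by move=> ts hts wts; apply: (H 0).
elim: ts m => [|t ts IH] m /=; first by rewrite addn0 cats0 => ->.
move=> hm /andP [wt wts]; apply: hs => //.
rewrite -[Leaf :: ts]/(nseq 1 Leaf ++ ts) catA -nseqD addn1.
by apply: IH; rewrite ?addSnnS.
Qed.

End Trees.

Section Envelope.
Variables (k : nat) (C : coloured_operad k).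
(* Not [ctree C]: [lia] would see [size] at the two convertible types as distinct atoms. *)
Notation T := (tree (celt C)).
Notation lab := (celt C).
Implicit Types (x y z : lab) (t u N : T) (ts pre post vs : seq T).

Lemma wf_treeE x ts :
  wf_tree (Node x ts) = [&& size ts == arity x, 1 < arity x & all wf_tree ts].
Proof. by []. Qed.

Lemma wf_corolla x : 1 < arity x -> wf_tree (corolla x).
Proof. by move=> h; rewrite wf_treeE size_nseq eqxx h /=; elim: (arity x). Qed.

Lemma wf_graft S N i : wf_tree S -> wf_tree N -> wf_tree (graft S i N).
Proof.
move=> + wN; elim/tree_ind_every: S i => [|x ts IH] i /=; first by case: ifP.
case/and3P => /eqP hs hx hw; rewrite -/(graft_forest N ts i) hx.
suff : size (graft_forest N ts i) = size ts /\ all wf_tree (graft_forest N ts i).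
  by case=> -> ->; rewrite hs eqxx.
elim: ts i IH hw {hs} => [|t ts IHts] i //= [h1 h2] /andP [w1 w2].
case: ifP => _ /=; first by rewrite h1 // w2.
by have [-> ->] := IHts (i - nleaves t) h2 w2; rewrite w1.
Qed.

Lemma wf_tree_replace_child x pre t u post :
  wf_tree (Node x (pre ++ t :: post)) -> wf_tree u -> wf_tree (Node x (pre ++ u :: post)).
Proof.
by rewrite !wf_treeE !size_cat /= !all_cat /= => /and3P [-> -> /and3P [-> _ ->]] ->.
Qed.

Lemma env_cong_wf s t : env_cong s t -> wf_tree s /\ wf_tree t.
Proof.
elim=> {s t} //.
- move=> x i y hx hy hi hc; split; first by apply: wf_graft; apply: wf_corolla.
  by apply: wf_corolla; rewrite ccomp_arity //; lia.
- by move=> s t _ [].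
- by move=> s t u _ [? _] _ [_ ?].
- by move=> S S' U U' i _ [? ?] _ [? ?] _; split; apply: wf_graft.
Qed.

Lemma env_cong_graft_leaf S S' t i : env_cong S S' -> wf_tree t -> i < nleaves S ->
  env_cong (graft S i t) (graft S' i t).
Proof. by move=> h wt hi; apply: env_comp => //; apply: env_refl. Qed.

Lemma env_cong_child x pre t t' post : env_cong t t' ->
  wf_tree (Node x (pre ++ t :: post)) ->
  env_cong (Node x (pre ++ t :: post)) (Node x (pre ++ t' :: post)).
Proof.
move=> h w; have wS : wf_tree (Node x (pre ++ Leaf :: post)).
  exact: wf_tree_replace_child w _.
have := env_comp (env_refl wS) h (i := forest_leaves pre).
rewrite !graft_leaf_child; apply.
by rewrite nleavesE forest_leaves_cat forest_leaves_cons /=; lia.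
Qed.

Lemma env_cong_map_children x (f : T -> T) pre ts :
  every (fun t => env_cong t (f t)) ts -> wf_tree (Node x (pre ++ ts)) ->
  env_cong (Node x (pre ++ ts)) (Node x (pre ++ map f ts)).
Proof.
elim: ts pre => [|t ts IH] pre /=; first by move=> _ w; apply: env_refl.
move=> [h1 h2] w; apply: env_trans (env_cong_child h1 w) _.
rewrite -!cat_rcons; apply: IH; rewrite ?cat_rcons //.
by apply: wf_tree_replace_child w _; case: (env_cong_wf h1).
Qed.

(** * Contracting an edge *)

Definition edge_contraction_cong x y pre vs post :=
  env_cong (Node x (pre ++ Node y vs :: post))
           (Node (ccomp x (size pre) y) (pre ++ vs ++ post)).

Lemma edge_contraction_corollas x y a m b :
  a + b.+1 = arity x -> m = arity y -> 1 < arity x -> 1 < arity y ->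
  cout y = nth 0 (cin x) a ->
  edge_contraction_cong x y (nseq a Leaf) (nseq m Leaf) (nseq b Leaf).
Proof.
move=> hax hm hx hy hc; have hi : a < arity x by lia.
have := env_gen hx hy hi hc.
rewrite {1}/corolla -hax nseqD -[nseq b.+1 _]/(Leaf :: nseq b Leaf).
rewrite -{2}[a](forest_leaves_nseq lab) graft_leaf_child /corolla.
rewrite ccomp_arity // /edge_contraction_cong size_nseq hm -!nseqD.
by rewrite (_ : arity x + arity y - 1 = a + (arity y + b)) //; lia.
Qed.

Lemma env_cong_fill_leaf x x' pre post pre' post' t :
  forest_leaves pre = forest_leaves pre' ->
  env_cong (Node x (pre ++ Leaf :: post)) (Node x' (pre' ++ Leaf :: post')) ->
  wf_tree t -> env_cong (Node x (pre ++ t :: post)) (Node x' (pre' ++ t :: post')).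
Proof.
move=> hl h wt; have := env_cong_graft_leaf (i := forest_leaves pre) h wt.
rewrite {3}hl !graft_leaf_child; apply.
by rewrite nleavesE forest_leaves_cat forest_leaves_cons /=; lia.
Qed.

Lemma edge_contraction_fill_left x y pre1 pre2 vs post t :
  edge_contraction_cong x y (pre1 ++ Leaf :: pre2) vs post -> wf_tree t ->
  edge_contraction_cong x y (pre1 ++ t :: pre2) vs post.
Proof.
rewrite /edge_contraction_cong !size_cat /= -!catA /= => h.
exact: env_cong_fill_leaf.
Qed.

Lemma edge_contraction_fill_right x y pre vs post1 post2 t :
  edge_contraction_cong x y pre vs (post1 ++ Leaf :: post2) -> wf_tree t ->
  edge_contraction_cong x y pre vs (post1 ++ t :: post2).
Proof.
move=> h wt.
have := @env_cong_fill_leaf x (ccomp x (size pre) y)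
  (pre ++ Node y vs :: post1) post2 (pre ++ vs ++ post1) post2 t.
rewrite -!catA /=; apply=> //.
by rewrite !forest_leaves_cat forest_leaves_cons nleavesE addnA.
Qed.

Lemma edge_contraction_fill_inner x y pre vs1 vs2 post t :
  edge_contraction_cong x y pre (vs1 ++ Leaf :: vs2) post -> wf_tree t ->
  edge_contraction_cong x y pre (vs1 ++ t :: vs2) post.
Proof.
rewrite /edge_contraction_cong => h wt.
have := env_cong_graft_leaf (i := forest_leaves pre + forest_leaves vs1) h wt.
rewrite graft_child; last by rewrite nleavesE forest_leaves_cat forest_leaves_cons /=; lia.
have E u : pre ++ (vs1 ++ u :: vs2) ++ post = (pre ++ vs1) ++ u :: vs2 ++ post.
  by rewrite -!catA.
rewrite graft_leaf_child !E -forest_leaves_cat graft_leaf_child; apply.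
rewrite nleavesE !forest_leaves_cat forest_leaves_cons nleavesE
  forest_leaves_cat forest_leaves_cons /=; lia.
Qed.

Lemma edge_contraction x y pre vs post :
  size pre + (size post).+1 = arity x -> size vs = arity y ->
  1 < arity x -> 1 < arity y -> cout y = nth 0 (cin x) (size pre) ->
  all wf_tree pre -> all wf_tree vs -> all wf_tree post ->
  edge_contraction_cong x y pre vs post.
Proof.
move=> hax hvs hx hy hc wpre wvs wpost.
pose P pre' vs' post' := edge_contraction_cong x y pre' vs' post'.
apply: (@forest_fill_ind _ _ (P ^~ vs ^~ post)) wpre => //;
  last by move=> *; apply: edge_contraction_fill_left.
apply: (@forest_fill_ind _ _ (P (nseq _ Leaf) ^~ post)) wvs => //;
  last by move=> *; apply: edge_contraction_fill_inner.
apply: (@forest_fill_ind _ _ (P (nseq _ Leaf) (nseq _ Leaf))) wpost => //;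
  last by move=> *; apply: edge_contraction_fill_right.
exact: edge_contraction_corollas.
Qed.

(** * Absorbing children into the root *)

Lemma size_take_cin x a : a < arity x -> size (take a (cin x)) = a.
Proof. by move=> h; rewrite size_takel // size_cin ltnW. Qed.

Lemma nth_cin_ccomp_lt x z a p : a < arity x -> cout z = nth 0 (cin x) a -> p < a ->
  nth 0 (cin (ccomp x a z)) p = nth 0 (cin x) p.
Proof.
by move=> ha hc hp; rewrite ccomp_cin // nth_cat size_take_cin // hp nth_take.
Qed.

Lemma nth_cin_ccomp_mid x z a q : a < arity x -> cout z = nth 0 (cin x) a ->
  q < arity z -> nth 0 (cin (ccomp x a z)) (a + q) = nth 0 (cin z) q.
Proof.
move=> ha hc hq; rewrite ccomp_cin // nth_cat size_take_cin // ltnNge leq_addr /=.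
by rewrite addKn nth_cat size_cin hq.
Qed.

Lemma nth_cin_ccomp_gt x z a p : a < arity x -> cout z = nth 0 (cin x) a -> a < p ->
  nth 0 (cin (ccomp x a z)) (p + arity z - 1) = nth 0 (cin x) p.
Proof.
move=> ha hc hp; have hz := arity_pos z.
rewrite ccomp_cin // nth_cat size_take_cin // ltnNge (_ : a <= _) /=; last by lia.
rewrite nth_cat size_cin ltnNge (_ : arity z <= _) /=; last by lia.
by rewrite nth_drop; congr nth; lia.
Qed.

(* The head of [ts] hangs from input [off] of the root [x]. *)
Fixpoint absorb x (off : nat) ts : lab * seq T :=
  match ts with
  | [::] => (x, [::])
  | Node y vs as t :: ts' =>
      if cout y == nth 0 (cin x) off then
        let p := absorb (ccomp x off y) (off + size vs) ts' in (p.1, vs ++ p.2)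
      else let p := absorb x off.+1 ts' in (p.1, t :: p.2)
  | Leaf :: ts' => let p := absorb x off.+1 ts' in (p.1, Leaf :: p.2)
  end.

Definition mergeable x (off : nat) t :=
  if t is Node y _ then cout y == nth 0 (cin x) off else false.

Lemma absorb_keep x off t ts : ~~ mergeable x off t ->
  absorb x off (t :: ts) = let p := absorb x off.+1 ts in (p.1, t :: p.2).
Proof. by case: t => [|y vs] //= /negbTE ->. Qed.

Definition absorb_node x off pre ts : T :=
  Node (absorb x off ts).1 (pre ++ (absorb x off ts).2).

Lemma absorb_node_keep x off pre t ts : ~~ mergeable x off t ->
  absorb_node x off pre (t :: ts) = absorb_node x off.+1 (rcons pre t) ts.
Proof. by move=> h; rewrite /absorb_node absorb_keep //= cat_rcons. Qed.

Lemma absorb_node_merge x off pre y vs ts : cout y = nth 0 (cin x) off ->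
  absorb_node x off pre (Node y vs :: ts) =
  absorb_node (ccomp x off y) (off + size vs) (pre ++ vs) ts.
Proof. by move=> h; rewrite /absorb_node /= h eqxx catA. Qed.

Lemma nth_cin_absorb x off ts a :
  off + size ts = arity x -> all wf_tree ts -> a < off ->
  nth 0 (cin (absorb x off ts).1) a = nth 0 (cin x) a.
Proof.
elim: ts x off => [|t ts IH] x off //= hs /andP [wt wts] ha.
case: t wt => [|y vs] wt; first by apply: IH => //; lia.
case/and3P: wt => /eqP hv hy _.
case: eqP => hc /=; last by apply: IH => //; lia.
rewrite IH //; [by rewrite nth_cin_ccomp_lt //; lia | | lia].
by rewrite ccomp_arity //; lia.
Qed.

Lemma arity_absorb x off ts : off + size ts = arity x -> all wf_tree ts ->
  arity (absorb x off ts).1 = off + size (absorb x off ts).2 /\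
  arity x <= arity (absorb x off ts).1.
Proof.
elim: ts x off => [|t ts IH] x off /=; first by rewrite addn0 => ->.
move=> hs /andP [wt wts].
case: t wt => [|y vs] wt.
  by have [-> h] := IH x off.+1 ltac:(lia) wts; split => //=; lia.
case/and3P: wt => /eqP hv hy _.
case: eqP => hc /=; last by have [-> h] := IH x off.+1 ltac:(lia) wts; split => //=; lia.
have hz := arity_pos y; have ha : off < arity x by lia.
have [] := IH (ccomp x off y) (off + size vs) ltac:(rewrite ccomp_arity //; lia) wts.
rewrite ccomp_arity // size_cat => -> h; split; first by rewrite addnA.
by move: h hz; clear; lia.
Qed.

Lemma forest_leaves_absorb x off ts :
  forest_leaves (absorb x off ts).2 = forest_leaves ts.
Proof.
elim: ts x off => [|[|y vs] ts IH] x off //=; first by rewrite !forest_leaves_cons IH.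
case: eqP => _ /=; last by rewrite !forest_leaves_cons IH.
by rewrite forest_leaves_cat IH forest_leaves_cons nleavesE.
Qed.

Definition anticoloured_at x (off : nat) ts :=
  all (fun p : nat * T => match p.2 with
                 | Leaf => true
                 | Node y _ => cout y != nth 0 (cin x) p.1
                 end) (zip (iota off (size ts)) ts).

Lemma anticolouredE x ts : anticoloured (Node x ts) =
  [&& size ts == arity x, 1 < arity x, anticoloured_at x 0 ts & all anticoloured ts].
Proof. by []. Qed.

Lemma anticoloured_at_cons x off t ts :
  anticoloured_at x off (t :: ts) = ~~ mergeable x off t && anticoloured_at x off.+1 ts.
Proof. by case: t. Qed.

Lemma anticoloured_at_cat x off ts1 ts2 :
  anticoloured_at x off (ts1 ++ ts2) =
  anticoloured_at x off ts1 && anticoloured_at x (off + size ts1) ts2.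
Proof. by rewrite /anticoloured_at size_cat iotaD zip_cat ?size_iota // all_cat. Qed.

Lemma anticoloured_at_nseq x off n : anticoloured_at x off (nseq n Leaf).
Proof. by elim: n off => //= n IH off; rewrite anticoloured_at_cons IH. Qed.

Lemma eq_anticoloured_at x x' off off' ts :
  (forall p, p < size ts -> nth 0 (cin x) (off + p) = nth 0 (cin x') (off' + p)) ->
  anticoloured_at x off ts = anticoloured_at x' off' ts.
Proof.
elim: ts off off' => [|t ts IH] off off' //= h.
rewrite !anticoloured_at_cons (IH off.+1 off'.+1); last first.
  by move=> p hp; rewrite !addSnnS; apply: h.
by case: t => //= y _; have := h 0 erefl; rewrite !addn0 => ->.
Qed.

Lemma anticoloured_wf t : anticoloured t -> wf_tree t.
Proof.
elim/tree_ind_every: t => // x ts IH; rewrite anticolouredE wf_treeE.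
by case/and4P=> -> -> _ /(every_sub_all IH) ->.
Qed.

Lemma absorb_id x off ts : anticoloured_at x off ts -> absorb x off ts = (x, ts).
Proof.
elim: ts off => [|t ts IH] off //.
by rewrite anticoloured_at_cons => /andP [h1 h2]; rewrite absorb_keep //= IH.
Qed.

Lemma absorb_anticoloured_at x off ts :
  off + size ts = arity x -> all anticoloured ts ->
  anticoloured_at (absorb x off ts).1 off (absorb x off ts).2 &&
  all anticoloured (absorb x off ts).2.
Proof.
elim: ts x off => [|t ts IH] x off //= hs /andP [act acts].
have wts : all wf_tree ts by apply: sub_all acts => u; apply: anticoloured_wf.
case: t act => [|y vs] act; first by rewrite anticoloured_at_cons /=; apply: IH => //; lia.
move: (act); rewrite anticolouredE => /and4P [/eqP hv hy cv av].
case: eqP => hc /=; last first.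
  rewrite anticoloured_at_cons /= -/(anticoloured_at y 0 vs) cv hv eqxx hy av.
  rewrite (nth_cin_absorb (a := off)) //; last by lia.
  by have /andP [-> ->] := IH x off.+1 ltac:(lia) acts; rewrite !andbT; apply/eqP.
have ha : off < arity x by lia.
have hs' : off + size vs + size ts = arity (ccomp x off y).
  by rewrite ccomp_arity // hv -hs; lia.
rewrite anticoloured_at_cat all_cat av /=.
have /andP [-> ->] := IH (ccomp x off y) (off + size vs) hs' acts.
rewrite !andbT -(eq_anticoloured_at (x := y) (off := 0)) // => p hp.
rewrite (nth_cin_absorb (a := off + p)) //; last by rewrite ltn_add2l.
by rewrite add0n nth_cin_ccomp_mid // -hv.
Qed.

Lemma anticoloured_absorb x ts : size ts = arity x -> 1 < arity x ->
  all anticoloured ts -> anticoloured (absorb_node x 0 [::] ts).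
Proof.
move=> hs hx hA.
have wts : all wf_tree ts by apply: sub_all hA => t; apply: anticoloured_wf.
have [e h] := arity_absorb (x := x) (off := 0) hs wts.
have /andP [c a] := absorb_anticoloured_at (x := x) (off := 0) hs hA.
by rewrite anticolouredE e c a eqxx /=; lia.
Qed.

Lemma env_cong_absorb x off pre ts : size pre = off -> off + size ts = arity x ->
  1 < arity x -> all wf_tree pre -> all wf_tree ts ->
  env_cong (Node x (pre ++ ts)) (absorb_node x off pre ts).
Proof.
elim: ts x off pre => [|t ts IH] x off pre hpre hs hx wpre.
  rewrite /absorb_node [absorb _ _ _]/= cats0 => _; apply: env_refl.
  by rewrite wf_treeE hx wpre -hs addn0 hpre eqxx.
case/andP=> wt wts.
have [hc|hc] := boolP (mergeable x off t); last first.
  rewrite absorb_node_keep // -cat_rcons; apply: IH => //.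
  - by rewrite size_rcons hpre.
  - by rewrite -hs /= addSnnS.
  - by rewrite -cats1 all_cat wpre /= wt.
case: t wt hc hs => // y vs wt /eqP hc hs.
move: (wt); rewrite wf_treeE => /and3P [/eqP hv hy wvs].
have hox : off < arity x by rewrite -hs -addSnnS leq_addr.
have e : edge_contraction_cong x y pre vs ts.
  by apply: edge_contraction; rewrite ?hpre //; move: hs => /=; lia.
rewrite /edge_contraction_cong hpre in e; apply: env_trans e _.
rewrite absorb_node_merge // catA; apply: IH => //.
- by rewrite size_cat hpre.
- by rewrite ccomp_arity // hv -hs /=; move: hy; clear; lia.
- by rewrite ccomp_arity //; move: hx (arity_pos y); clear; lia.
- by rewrite all_cat wpre wvs.
Qed.

(** * The normal form *)

Fixpoint acnorm t : T :=
  match t with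
  | Leaf => Leaf
  | Node x ts => absorb_node x 0 [::] (map acnorm ts)
  end.

Lemma acnormE x ts : acnorm (Node x ts) = absorb_node x 0 [::] (map acnorm ts).
Proof. by []. Qed.

Lemma nleaves_acnorm t : nleaves (acnorm t) = nleaves t.
Proof.
elim/tree_ind_every: t => // x ts IH.
rewrite acnormE /absorb_node !nleavesE forest_leaves_absorb.
by elim: ts IH => //= t ts IHts [h1 h2]; rewrite !forest_leaves_cons h1 IHts.
Qed.

Lemma forest_leaves_map_acnorm ts : forest_leaves (map acnorm ts) = forest_leaves ts.
Proof. by elim: ts => //= t ts IH; rewrite !forest_leaves_cons nleaves_acnorm IH. Qed.

Lemma anticoloured_acnorm t : wf_tree t -> anticoloured (acnorm t).
Proof.
elim/tree_ind_every: t => // x ts IH /and3P [/eqP hs hx hw].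
apply: anticoloured_absorb; rewrite ?size_map // all_map.
exact: every_sub_all IH hw.
Qed.

Lemma acnorm_id t : anticoloured t -> acnorm t = t.
Proof.
elim/tree_ind_every: t => // x ts IH; rewrite anticolouredE => /and4P [_ _ hc ha] /=.
suff -> : map acnorm ts = ts by rewrite /absorb_node absorb_id.
by elim: ts IH ha {hc} => //= t ts IHts [h1 h2] /andP [a1 a2]; rewrite h1 // IHts.
Qed.

Lemma env_cong_acnorm t : wf_tree t -> env_cong (acnorm t) t.
Proof.
elim/tree_ind_every: t => [|x ts IH] w; first exact: env_refl.
have /and3P [/eqP hs hx hw] := w.
apply: env_sym; apply: env_trans (env_cong_map_children (pre := [::]) (f := acnorm) _ w) _.
  by elim: ts IH hw {w hs} => //= t ts IHts [h1 h2] /andP [w1 w2];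
    split; [apply: env_sym; apply: h1 | apply: IHts].
apply: (env_cong_absorb (off := 0) (pre := [::])) => //; first by rewrite size_map.
by rewrite all_map; apply: sub_all hw => t /anticoloured_acnorm /anticoloured_wf.
Qed.

(** * Normal forms of grafts *)

Definition acgraft_forest N := fix gs ts (i : nat) : seq T :=
  match ts with
  | [::] => [::]
  | t :: ts' => if i < nleaves t then acgraft t i N :: ts'
                else t :: gs ts' (i - nleaves t)
  end.

Lemma acgraft_child x pre t post i N : i < nleaves t ->
  acgraft (Node x (pre ++ t :: post)) (forest_leaves pre + i) N =
  if t is Leaf then merge_graft x (pre ++ Leaf :: post) (size pre) N
  else Node x (pre ++ acgraft t i N :: post).
Proof.
move=> hi; rewrite /= -/(acgraft_forest N _ _) locate_cat // size_cat /=.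
rewrite addnS ltnS leq_addr nth_cat ltnn subnn /=.
case: t hi => [|y vs] hi //=; congr Node.
elim: pre => [|u pre IH] /=; first by rewrite hi.
by rewrite forest_leaves_cons -addnA ltnNge leq_addr /= addKn IH.
Qed.

Lemma merge_graft_cat x pre post N :
  merge_graft x (pre ++ Leaf :: post) (size pre) N =
  if N is Node z ws then
    if cout z == nth 0 (cin x) (size pre)
    then Node (ccomp x (size pre) z) (pre ++ ws ++ post)
    else Node x (pre ++ N :: post)
  else Node x (pre ++ Leaf :: post).
Proof.
case: N => [|z ws] //=.
have hdrop : drop (size pre).+1 (pre ++ Leaf :: post) = post.
  by rewrite -cat_rcons drop_size_cat ?size_rcons.
by rewrite set_nthE size_cat addnS ltnS leq_addr take_size_cat // hdrop.
Qed.

Lemma absorb_ccomp_lt x off post a z :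
  off + size post = arity x -> all wf_tree post -> a < off -> cout z = nth 0 (cin x) a ->
  absorb (ccomp x a z) (off + arity z - 1) post =
  (ccomp (absorb x off post).1 a z, (absorb x off post).2).
Proof.
elim: post x off => [|t ts IH] x off //= hs /andP [wt wts] ha hc.
have hz := arity_pos z; have hax : a < arity x by lia.
have hcol : nth 0 (cin (ccomp x a z)) (off + arity z - 1) = nth 0 (cin x) off.
  by rewrite nth_cin_ccomp_gt.
have E : (off + arity z - 1).+1 = off.+1 + arity z - 1 by lia.
case: t wt => [|y vs] wt; first by rewrite E IH //; lia.
rewrite hcol; case: eqP => hy /=; last by rewrite E IH //; lia.
move: wt; rewrite wf_treeE => /and3P [/eqP hv hy1 _].
have hox : off < arity x by lia.
rewrite ccomp_assoc_par // (_ : off + arity z - 1 + size vs = off + size vs + arity z - 1).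
  rewrite IH //; first by rewrite ccomp_arity // hv -hs; move: hy1; clear; lia.
  - by move: ha; clear; lia.
  - by rewrite nth_cin_ccomp_lt.
by move: hz; clear; lia.
Qed.

Lemma mergeable_acgraft x off y vs l N : wf_tree (Node y vs) -> l < forest_leaves vs ->
  mergeable x off (acgraft (Node y vs) l N) = mergeable x off (Node y vs).
Proof.
rewrite wf_treeE => /and3P [/eqP hv _ _] hl.
have [vpre [v [vpost [l' [Evs -> hl']]]]] := forest_leaf_split hl; subst vs.
rewrite acgraft_child //; clear hl; case: v hl' hv => // hl' hv.
rewrite merge_graft_cat; case: N => // z ws; case: eqP => //= hz.
by rewrite ccomp_cout // -hv size_cat /= -addSnnS leq_addr.
Qed.

Lemma absorb_node_graft_leaf x off pre post N :
  size pre = off -> off + (size post).+1 = arity x -> all wf_tree post -> wf_tree N ->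
  absorb_node x off pre (N :: post) =
  acgraft (absorb_node x off pre (Leaf :: post)) (forest_leaves pre) N.
Proof.
move=> hpre hs wpost wN; have hox : off < arity x by rewrite -hs -addSnnS leq_addr.
rewrite (@absorb_node_keep x off pre Leaf) // {2}/absorb_node cat_rcons.
rewrite -[forest_leaves pre]addn0 acgraft_child // merge_graft_cat hpre.
case: N wN => [|z ws] wN.
  by rewrite (@absorb_node_keep x off pre Leaf) // /absorb_node cat_rcons.
rewrite (nth_cin_absorb (a := off)) //; last by rewrite addSnnS.
case: eqP => hz; last first.
  by rewrite absorb_node_keep /=; [rewrite /absorb_node cat_rcons | apply/eqP].
move: wN; rewrite wf_treeE => /and3P [/eqP hw _ _].
rewrite absorb_node_merge // /absorb_node hw -catA.
rewrite (_ : off + arity z = off.+1 + arity z - 1); last by lia.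
by rewrite absorb_ccomp_lt ?addSnnS.
Qed.

Lemma absorb_node_acgraft_keep x off pre y vs post l N :
  ~~ mergeable x off (Node y vs) -> wf_tree (Node y vs) -> l < nleaves (Node y vs) ->
  absorb_node x off pre (acgraft (Node y vs) l N :: post) =
  acgraft (absorb_node x off pre (Node y vs :: post)) (forest_leaves pre + l) N.
Proof.
move=> hm wt hl; rewrite !absorb_node_keep ?mergeable_acgraft //.
by rewrite /absorb_node !cat_rcons acgraft_child.
Qed.

Lemma absorb_node_acgraft_merge x off pre y vs post l N :
  size pre = off -> off + (size post).+1 = arity x -> all wf_tree post -> wf_tree N ->
  cout y = nth 0 (cin x) off -> wf_tree (Node y vs) -> l < nleaves (Node y vs) ->
  absorb_node x off pre (acgraft (Node y vs) l N :: post) =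
  acgraft (absorb_node x off pre (Node y vs :: post)) (forest_leaves pre + l) N.
Proof.
move=> hpre hs wpost wN hc wt hl.
move: wt; rewrite wf_treeE => /and3P [/eqP hv hy _].
have hox : off < arity x by rewrite -hs -addSnnS leq_addr.
have [vpre [v [vpost [l' [Evs El hl']]]]] := forest_leaf_split hl; subst vs l.
have hq : size vpre < arity y by rewrite -hv size_cat /= -addSnnS leq_addr.
rewrite absorb_node_merge // {2}/absorb_node addnA -forest_leaves_cat size_cat.
rewrite [size (v :: _)]/=.
have hsy : off + (size vpre + (size vpost).+1) + size post = arity (ccomp x off y).
  by rewrite ccomp_arity // -hv size_cat /=; lia.
set R := absorb _ _ post.
have -> : (pre ++ vpre ++ v :: vpost) ++ R.2 = (pre ++ vpre) ++ v :: vpost ++ R.2.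
  by rewrite -!catA.
rewrite !acgraft_child //; case: v hl' hv {hl} => [|v1 v2] hl' hv; last first.
  by rewrite absorb_node_merge // /absorb_node !size_cat /= -!catA.
rewrite !merge_graft_cat; case: N wN => [|z ws] wN.
  by rewrite absorb_node_merge // /absorb_node size_cat -!catA.
have hmid : nth 0 (cin R.1) (size (pre ++ vpre)) = nth 0 (cin y) (size vpre).
  rewrite size_cat hpre (nth_cin_absorb (a := off + size vpre)) //.
  - by rewrite nth_cin_ccomp_mid.
  - by rewrite ltn_add2l -addSnnS leq_addr.
rewrite hmid; case: eqP => hz; last first.
  by rewrite absorb_node_merge // /absorb_node !size_cat /= -!catA.
move: wN; rewrite wf_treeE => /and3P [/eqP hw hz1 _].
rewrite absorb_node_merge ?ccomp_cout // -ccomp_assoc_seq // /absorb_node.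
have -> : off + size (vpre ++ ws ++ vpost) = off + (size vpre + (size vpost).+1) + arity z - 1.
  by rewrite !size_cat /= hw; lia.
rewrite absorb_ccomp_lt //; last 2 first.
- by rewrite ltn_add2l -addSnnS leq_addr.
- by rewrite nth_cin_ccomp_mid.
by rewrite size_cat hpre -!catA.
Qed.

Lemma absorb_node_acgraft_head x off pre t post l N :
  size pre = off -> off + (size post).+1 = arity x -> wf_tree t -> all wf_tree post ->
  wf_tree N -> l < nleaves t ->
  absorb_node x off pre (acgraft t l N :: post) =
  acgraft (absorb_node x off pre (t :: post)) (forest_leaves pre + l) N.
Proof.
move=> hpre hs wt wpost wN; case: t wt => [|y vs] wt hl.
  by case: l hl => // _; rewrite addn0; apply: absorb_node_graft_leaf.
have [/eqP hc|hc] := boolP (mergeable x off (Node y vs)).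
  exact: absorb_node_acgraft_merge.
exact: absorb_node_acgraft_keep.
Qed.

Lemma absorb_node_cons x off t : wf_tree t -> off < arity x ->
  exists x' out,
  [/\ forall pre ts,
        absorb_node x off pre (t :: ts) = absorb_node x' (off + size out) (pre ++ out) ts,
      forest_leaves out = nleaves t & arity x' + 1 = arity x + size out].
Proof.
move=> wt hox; have [hc|hc] := boolP (mergeable x off t); last first.
  exists x, [:: t]; split => //; last by rewrite forest_leaves_cons addn0.
  by move=> pre ts; rewrite absorb_node_keep // cats1 addn1.
case: t wt hc => // y vs wt /eqP hc; move: wt; rewrite wf_treeE => /and3P [/eqP hv hy _].
exists (ccomp x off y), vs; split => //.
- by move=> pre ts; rewrite absorb_node_merge.
- by rewrite ccomp_arity // hv; lia.
Qed.

Lemma absorb_node_acgraft x off pre ts t post l N :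
  size pre = off -> off + size (ts ++ t :: post) = arity x ->
  all wf_tree (ts ++ t :: post) -> wf_tree N -> l < nleaves t ->
  absorb_node x off pre (ts ++ acgraft t l N :: post) =
  acgraft (absorb_node x off pre (ts ++ t :: post))
    (forest_leaves pre + forest_leaves ts + l) N.
Proof.
elim: ts x off pre => [|u ts IH] x off pre hpre hs wall wN hl.
  move: wall => /= /andP [wt wpost]; rewrite addn0.
  by apply: absorb_node_acgraft_head => //; rewrite -hs addn0.
move: wall => /andP [wu wall]; rewrite /= in hs.
have hox : off < arity x by rewrite -hs addnS ltnS leq_addr.
have [x' [out [Eabs Enl Ear]]] := absorb_node_cons wu hox.
rewrite !Eabs forest_leaves_cons -Enl addnA -forest_leaves_cat.
by apply: IH => //; [rewrite size_cat hpre | move: Ear hs => /=; lia].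
Qed.

Lemma acnorm_graft S i N : wf_tree S -> wf_tree N -> i < nleaves S ->
  acnorm (graft S i N) = acgraft (acnorm S) i (acnorm N).
Proof.
move=> + wN; elim/tree_ind_every: S i => [|x ts IH] i; first by case: i.
rewrite wf_treeE nleavesE => /and3P [/eqP hs hx hw] hi.
have [pre [t [post [l [Ets -> hl]]]]] := forest_leaf_split hi; subst ts.
move: hw; rewrite all_cat => /andP [wpre /andP [wt wpost]].
rewrite graft_child // !acnormE !map_cat /= (every_mid IH) //.
have wacnorm ts' : all wf_tree ts' -> all wf_tree (map acnorm ts').
  by move=> w; rewrite all_map; apply: sub_all w => u /anticoloured_acnorm /anticoloured_wf.
have := @absorb_node_acgraft x 0 [::] (map acnorm pre) (acnorm t)
  (map acnorm post) l (acnorm N) erefl.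
rewrite forest_leaves_map_acnorm nleaves_acnorm; apply=> //.
- by rewrite add0n -hs !size_cat /= !size_map.
- by rewrite all_cat /= !wacnorm // (anticoloured_wf (anticoloured_acnorm wt)).
- exact/anticoloured_wf/anticoloured_acnorm.
Qed.

Lemma anticoloured_corolla x : 1 < arity x -> anticoloured (corolla x).
Proof.
move=> h; rewrite /corolla anticolouredE size_nseq eqxx h anticoloured_at_nseq /=.
by elim: (arity x).
Qed.

Lemma nleaves_corolla x : nleaves (corolla x) = arity x.
Proof. by rewrite /corolla nleavesE forest_leaves_nseq. Qed.

Lemma acgraft_corolla x y i : i < arity x -> cout y = nth 0 (cin x) i ->
  acgraft (corolla x) i (corolla y) = corolla (ccomp x i y).
Proof.
move=> hi hc; rewrite /corolla.
have -> : nseq (arity x) Leaf = nseq i Leaf ++ Leaf :: nseq (arity x - i.+1) (@Leaf lab).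
  by rewrite -[Leaf :: _]/(nseq (arity x - i.+1).+1 Leaf) -nseqD; congr nseq; lia.
have := @acgraft_child x (nseq i Leaf) Leaf (nseq (arity x - i.+1) Leaf) 0
  (Node y (nseq (arity y) Leaf)) erefl.
rewrite addn0 forest_leaves_nseq => ->.
rewrite merge_graft_cat size_nseq hc eqxx ccomp_arity // -!nseqD.
by congr Node; congr nseq; move: (arity_pos y); lia.
Qed.

Lemma acnorm_env_cong s t : env_cong s t -> acnorm s = acnorm t.
Proof.
elim=> {s t} //.
- move=> x i y hx hy hi hc.
  rewrite acnorm_graft ?wf_corolla ?nleaves_corolla // !acnorm_id ?anticoloured_corolla //.
    by rewrite acgraft_corolla.
  by rewrite ccomp_arity //; lia.
- by move=> s t u _ -> _ ->.
- move=> S S' U U' i hS eS hU eU hi.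
  have [w1 w2] := env_cong_wf hS; have [w3 w4] := env_cong_wf hU.
  by rewrite !acnorm_graft // ?eS ?eU // -nleaves_acnorm -eS nleaves_acnorm.
Qed.

End Envelope.

Theorem proposition1p1 (k : nat) (C : coloured_operad k) (hk : 0 < k) :
  (forall t : ctree C, wf_tree t ->
     exists! a : ctree C, anticoloured a /\ env_cong a t)
  /\
  (forall (a b : ctree C) (i : nat),
     anticoloured a -> anticoloured b -> i < nleaves a ->
     anticoloured (acgraft a i b) /\ env_cong (acgraft a i b) (graft a i b)).
Proof.
have acnorm_spec t : wf_tree t -> anticoloured (acnorm t) /\ env_cong (acnorm t) t.
  by move=> wt; split; [apply: anticoloured_acnorm | apply: env_cong_acnorm].
split=> [t wt | a b i ha hb hi].
  exists (acnorm t); split=> [|a [ha hat]]; first exact: acnorm_spec.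
  by rewrite -(acnorm_id ha) (acnorm_env_cong hat).
have [wa wb] := (anticoloured_wf ha, anticoloured_wf hb).
have -> : acgraft a i b = acnorm (graft a i b) by rewrite acnorm_graft ?acnorm_id.
exact/acnorm_spec/wf_graft.
Qed.
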